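(* Let $V=V_1\oplus V_2\oplus V_4$ and $R=\mathcal{O}(V)^{\mathrm{SL}_2(\mathbb{C})}$. Then $R$ has no homogeneous system of parameters with degrees $2,2,3,3,3,4,5$; indeed, all invariants of degrees $2$ up to $5$ vanish at $(x,0,4xy^3)$, which is not in the nullcone of $V$.
   Context: $V_k$ is the $\mathrm{SL}_2(\mathbb{C})$-module of complex binary forms of degree $k$ in $x,y$; $R$ is the graded algebra of invariant polynomial functions on $V$. A homogeneous system of parameters is a set of algebraically independent homogeneous elements of positive degree over whose generated subalgebra $R$ is integral. The nullcone of $V$ is the set of points of $V$ at which all homogeneous invariants of positive degree vanish. *)

From HB Require Import structures.
From Stdlib Require Import Rdefinitions.
From mathcomp Require Import all_boot all_algebra.
From mathcomp Require Import complex.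
From mathcomp.reals_stdlib Require Import Rstruct.
From mathcomp Require Import mpoly.

Set Implicit Arguments.
Unset Strict Implicit.
Unset Printing Implicit Defensive.
Import GRing.Theory.
Local Open Scope ring_scope.

Notation C := (Rdefinitions.R[i]).

Definition bx : {mpoly C[2]} := 'X_(@ord0 1).
Definition by_ : {mpoly C[2]} := 'X_(@ord_max 1).

(* The binary form of degree k with coefficient vector c:
   sum_{i=0}^k c_i x^(k-i) y^i.  V_k is identified with 'I_k.+1 -> C. *)
Definition bform (k : nat) (c : 'I_k.+1 -> C) : {mpoly C[2]} :=
  \sum_(i < k.+1) c i *: (bx ^+ (k - i) * by_ ^+ i).

Definition gsubst (g : 'M[C]_2) : 2.-tuple {mpoly C[2]} :=
  [tuple of [:: g ord0 ord0 *: bx + g ord0 ord_max *: by_ ;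
                g ord_max ord0 *: bx + g ord_max ord_max *: by_]].

Definition form_act_rel (g : 'M[C]_2) (k : nat) (c c' : 'I_k.+1 -> C) : Prop :=
  bform c' = bform c \mPo gsubst g.

(* V = V_1 + V_2 + V_4, a point is given by its 2 + 3 + 5 = 10 coordinates. *)
Definition pt1 (v : 'I_10 -> C) : 'I_2 -> C := fun j => v (inord j).
Definition pt2 (v : 'I_10 -> C) : 'I_3 -> C := fun j => v (inord (2 + j)).
Definition pt4 (v : 'I_10 -> C) : 'I_5 -> C := fun j => v (inord (5 + j)).

Definition act_rel (g : 'M[C]_2) (v w : 'I_10 -> C) : Prop :=
  [/\ form_act_rel g (pt1 v) (pt1 w),
      form_act_rel g (pt2 v) (pt2 w) &
      form_act_rel g (pt4 v) (pt4 w)].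

Definition SL2invariant (P : {mpoly C[10]}) : Prop :=
  forall g : 'M[C]_2, \det g = 1 ->
  forall v w : 'I_10 -> C, act_rel g v w -> P.@[w] = P.@[v].

Definition is_hsop (n : nat) (f : 'I_n -> {mpoly C[10]}) : Prop :=
  [/\
      forall i, SL2invariant (f i) /\ exists2 d, (0 < d)%N & f i \is d.-homog,
      forall q : {mpoly C[n]}, q \mPo [tuple f i | i < n] = 0 -> q = 0 &
      forall P, SL2invariant P ->
        exists2 Q : {poly {mpoly C[n]}}, Q \is monic &
          (map_poly (comp_mpoly [tuple f i | i < n]) Q).[P] = 0].

Definition in_nullcone (v : 'I_10 -> C) : Prop :=
  forall P : {mpoly C[10]}, SL2invariant P ->
  forall d, (0 < d)%N -> P \is d.-homog -> P.@[v] = 0.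

(* The point (x, 0, 4 x y^3) of V_1 + V_2 + V_4: coordinate 0 is the coefficient
   of x in V_1, coordinate 5 + 3 = 8 is the coefficient of x y^3 in V_4. *)
Definition p0 : 'I_10 -> C :=
  fun i => if val i == 0%N then 1 else if val i == 8%N then 4%:R else 0.

(* An invariant of degree d is isobaric: the diagonal torus diag(t, t^-1), combined with the
   scaling by t^4, multiplies it by t^(4d), so only monomials of weight 4d occur, for the
   nonnegative weights [torus_wt].  At p0 = (x, 0, 4xy^3) the only such monomial of degree
   2 <= d <= 5 that does not vanish is l0^2 a3 (l the linear form, a the quartic), of
   degree 3.  Its coefficient in a cubic invariant P is, up to the factor 4, the coefficient
   of c in P(x, 0, (cx + y)^4), which is constant in c because (x, 0, (cx + y)^4) is an
   SL2-translate of (x, 0, y^4).  Hence every invariant of degree 2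
   to 5 vanishes on the line through p0.  If an hsop had these degrees, every invariant, being
   integral over it, would vanish at p0; but the degree 6 invariant [hess_root] does not. *)
From HB Require Import structures.
From Stdlib Require Import Rdefinitions.
From mathcomp Require Import all_boot all_algebra.
From mathcomp Require Import complex.
From mathcomp.reals_stdlib Require Import Rstruct.
From mathcomp Require Import mpoly.
From mathcomp Require Import ring zify.

Set Implicit Arguments.
Unset Strict Implicit.
Unset Printing Implicit Defensive.
Import GRing.Theory Num.Theory.
Local Open Scope ring_scope.

Lemma big_ord_iota n (R : Type) (idx : R) (op : Monoid.law idx) (F : 'I_n.+1 -> R) :
  \big[op/idx]_(i < n.+1) F i = \big[op/idx]_(k <- iota 0 n.+1) F (inord k).
Proof.
rewrite (eq_bigr (fun i : 'I_n.+1 => F (inord i))) => [|i _]; last by rewrite inord_val.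
by rewrite -(big_mkord xpredT (fun k => F (inord k))).
Qed.

Lemma sum_pow_coef (R : numDomainType) (I : Type) (s : seq I) (P : pred I)
    (a : I -> R) (k : I -> nat) (b : R) (K : nat) :
  (forall z : R, z != 0 -> \sum_(x <- s | P x) a x * z ^+ k x = b * z ^+ K) ->
  \sum_(x <- s | P x && (k x == K)) a x = b.
Proof.
move=> eq_pow.
pose p : {poly R} := \sum_(x <- s | P x) a x *: 'X^(k x) - b *: 'X^K.
have p_root z : z != 0 -> p.[z] = 0.
  move=> nz_z; rewrite hornerD hornerN horner_sum hornerZ hornerXn -(eq_pow z nz_z).
  by apply/eqP; rewrite subr_eq0; apply/eqP/eq_bigr => x _; rewrite hornerZ hornerXn.
have p0 : p = 0.
  apply: (@roots_geq_poly_eq0 _ p [seq i.+1%:R | i <- iota 0 (size p)]).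
  - by apply/allP => z /mapP[i _ ->]; apply/eqP/p_root; rewrite pnatr_eq0.
  - by rewrite map_inj_uniq ?iota_uniq // => i j /eqP; rewrite eqr_nat => /eqP[].
  - by rewrite size_map size_iota.
have := congr1 (fun q : {poly R} => q`_K) p0.
rewrite coefB coef_sumMXn coefZ coefXn eqxx mulr1 coef0 => /eqP.
by rewrite subr_eq0 => /eqP.
Qed.

Lemma prod_exp_neq0 n (R : idomainType) (v : 'I_n -> R) (m : 'X_{1..n}) i :
  \prod_j v j ^+ m j != 0 -> v i = 0 -> m i = 0%N.
Proof.
move=> /prodf_neq0/(_ i isT) + vi0; rewrite vi0 expf_eq0 eqxx andbT.
by rewrite lt0n negbK => /eqP.
Qed.

Lemma eq_mnm_inord n (m m' : 'X_{1..n.+1}) :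
  (forall k, (k <= n)%N -> m (inord k) = m' (inord k)) -> m = m'.
Proof. by move=> eq_mm'; apply/mnmP => i; rewrite -(inord_val i) eq_mm' // -ltnS. Qed.

Definition wdeg n (e : 'I_n -> nat) (m : 'X_{1..n}) : nat := \sum_i e i * m i.

Lemma prod_weighted n (R : comRingType) (e : 'I_n -> nat) (v : 'I_n -> R) t (m : 'X_{1..n}) :
  \prod_i (t ^+ e i * v i) ^+ m i = t ^+ wdeg e m * \prod_i v i ^+ m i.
Proof.
rewrite (eq_bigr (fun i => t ^+ (e i * m i) * v i ^+ m i)) => [|i _]; last first.
  by rewrite exprMn exprM.
by rewrite big_split /= prodrXr.
Qed.

Lemma meval_homog_scale n (R : comRingType) d (P : {mpoly R[n]}) v t :
  P \is d.-homog -> P.@[fun i => t * v i] = t ^+ d * P.@[v].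
Proof.
move=> homP; rewrite !mevalE mulr_sumr; apply: eq_big_seq => m mP.
rewrite (prod_weighted (fun=> 1%N)) mulrCA; congr (_ ^+ _ * _).
by rewrite -(dhomog_mf homP mP) /= mdegE; apply: eq_bigr => i _; rewrite mul1n.
Qed.

Lemma sum_msupp_single n (R : ringType) (P : {mpoly R[n]}) (Q : pred 'X_{1..n})
    (G : 'X_{1..n} -> R) m0 :
  Q m0 -> {in msupp P, forall m, Q m -> P@_m * G m != 0 -> m = m0} ->
  \sum_(m <- msupp P | Q m) P@_m * G m = P@_m0 * G m0.
Proof.
move=> Qm0 single; rewrite big_mkcond /=.
have [m0P|m0NP] := boolP (m0 \in msupp P).
  rewrite (bigD1_seq m0) ?msupp_uniq //= Qm0 big1_seq ?addr0 // => m /andP[ne_m mP].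
  case: ifP => // Qm; apply/eqP; apply: contraNT ne_m => nz.
  by rewrite (single m mP Qm nz).
rewrite memN_msupp_eq0 // mul0r big1_seq // => m mP.
case: ifP => // Qm; apply/eqP; apply: contraNT m0NP => nz.
by rewrite -(single m mP Qm nz).
Qed.

Lemma dhomogM_eq n (R : comRingType) d e k (p q : {mpoly R[n]}) :
  p \is d.-homog -> q \is e.-homog -> (d + e)%N = k -> p * q \is k.-homog.
Proof. by move=> homp homq <-; exact: dhomogM. Qed.

Lemma dhomogXn_eq n (R : comRingType) d e k (p : {mpoly R[n]}) :
  p \is d.-homog -> (d * e)%N = k -> p ^+ e \is k.-homog.
Proof. by move=> homp <-; exact: dhomogMn. Qed.

Lemma dhomog_natr n (R : comRingType) k : (k%:R : {mpoly R[n]}) \is 0.-homog.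
Proof. exact/rpredMn/dhomog1. Qed.

Lemma dhomogXU n (R : comRingType) (i : 'I_n) : ('X_i : {mpoly R[n]}) \is 1.-homog.
Proof. by rewrite dhomogX /= mdeg1. Qed.

Ltac solve_dhomog :=
  lazymatch goal with
  | |- is_true (_ + _ \in _) => apply: rpredD; solve_dhomog
  | |- is_true (- _ \in _) => rewrite rpredN; solve_dhomog
  | |- is_true (_ * _ \in _) => eapply dhomogM_eq; [solve_dhomog | solve_dhomog | reflexivity]
  | |- is_true (_ ^+ _ \in _) => eapply dhomogXn_eq; [solve_dhomog | reflexivity]
  | |- is_true ('X_ _ \in _) => exact: dhomogXU
  | |- _ => exact: dhomog_natr
  end.

(* Rewriting with the generic [rmorphM] and [rmorphXn] at [comp_mpoly] is prohibitively slow. *)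
Lemma comp_mpolyM n k (R : comRingType) (lq : n.-tuple {mpoly R[k]}) :
  {morph comp_mpoly lq : p q / p * q}.
Proof. exact: rmorphM. Qed.

Lemma comp_mpolyXn n k (R : comRingType) (lq : n.-tuple {mpoly R[k]}) e :
  {morph comp_mpoly lq : p / p ^+ e}.
Proof. exact: rmorphXn. Qed.

Definition bmon k j : 'X_{1..2} := (U_(@ord0 1) *+ (k - j) + U_(@ord_max 1) *+ j)%MM.

Lemma mcoeff_bform k (c : 'I_k.+1 -> C) (j : 'I_k.+1) : (bform c)@_(bmon k j) = c j.
Proof.
have bmonE i : bx ^+ (k - i) * by_ ^+ i = 'X_[bmon k i] by rewrite !mpolyXn -mpolyXD.
have bmon_max i : bmon k i (@ord_max 1) = i by rewrite mnmDE !mulmnE !mnm1E /= mul1n.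
rewrite /bform raddf_sum (bigD1 j) //= bmonE mcoeffZ mcoeffX eqxx mulr1.
rewrite big1 ?addr0 // => i ne_ij; rewrite bmonE mcoeffZ mcoeffX.
case: eqP => [eq_m|]; last by rewrite mulr0.
have := congr1 (fun m : 'X_{1..2} => m (@ord_max 1)) eq_m.
by rewrite /= !bmon_max => /val_inj eq_ij; rewrite eq_ij eqxx in ne_ij.
Qed.

Lemma bform_inj k (c c' : 'I_k.+1 -> C) : bform c = bform c' -> c =1 c'.
Proof. by move=> eq_cc' j; rewrite -mcoeff_bform eq_cc' mcoeff_bform. Qed.

Lemma bform_iota k (c : 'I_k.+1 -> C) :
  bform c = \sum_(i <- iota 0 k.+1) c (inord i) *: (bx ^+ (k - i) * by_ ^+ i).
Proof.
rewrite /bform (eq_bigr (fun i : 'I_k.+1 => c (inord i) *: (bx ^+ (k - i) * by_ ^+ i))).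
  by rewrite -(big_mkord xpredT (fun i => c (inord i) *: (bx ^+ (k - i) * by_ ^+ i))).
by move=> i _; rewrite inord_val.
Qed.

Lemma monomial_comp g i j : (bx ^+ i * by_ ^+ j) \mPo gsubst g =
  (g ord0 ord0 *: bx + g ord0 ord_max *: by_) ^+ i *
  (g ord_max ord0 *: bx + g ord_max ord_max *: by_) ^+ j.
Proof.
have bx_comp : bx \mPo gsubst g = g ord0 ord0 *: bx + g ord0 ord_max *: by_.
  by rewrite /bx comp_mpolyXU.
have by_comp : by_ \mPo gsubst g = g ord_max ord0 *: bx + g ord_max ord_max *: by_.
  by rewrite /by_ comp_mpolyXU.
by rewrite comp_mpolyM !comp_mpolyXn bx_comp by_comp.
Qed.

(* Coordinates of g . v for g = [[a, b], [c, d]]: on each summand,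
   (g . f)(x, y) = f(a x + b y, c x + d y). *)
Definition act_coord (a b c d : C) (v : 'I_10 -> C) (i : nat) : C :=
  match i with
  | 0 => a * v (inord 0) + c * v (inord 1)
  | 1 => b * v (inord 0) + d * v (inord 1)
  | 2 => a ^+ 2 * v (inord 2) + a * c * v (inord 3) + c ^+ 2 * v (inord 4)
  | 3 => 2 * a * b * v (inord 2) + (b * c + a * d) * v (inord 3) + 2 * c * d * v (inord 4)
  | 4 => b ^+ 2 * v (inord 2) + b * d * v (inord 3) + d ^+ 2 * v (inord 4)
  | 5 => a ^+ 4 * v (inord 5) + a ^+ 3 * c * v (inord 6) + a ^+ 2 * c ^+ 2 * v (inord 7)
         + a * c ^+ 3 * v (inord 8) + c ^+ 4 * v (inord 9)
  | 6 => 4 * a ^+ 3 * b * v (inord 5) + (3 * a ^+ 2 * b * c + a ^+ 3 * d) * v (inord 6)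
         + (2 * a * b * c ^+ 2 + 2 * a ^+ 2 * c * d) * v (inord 7)
         + (b * c ^+ 3 + 3 * a * c ^+ 2 * d) * v (inord 8) + 4 * c ^+ 3 * d * v (inord 9)
  | 7 => 6 * a ^+ 2 * b ^+ 2 * v (inord 5)
         + (3 * a * b ^+ 2 * c + 3 * a ^+ 2 * b * d) * v (inord 6)
         + (b ^+ 2 * c ^+ 2 + 4 * a * b * c * d + a ^+ 2 * d ^+ 2) * v (inord 7)
         + (3 * b * c ^+ 2 * d + 3 * a * c * d ^+ 2) * v (inord 8)
         + 6 * c ^+ 2 * d ^+ 2 * v (inord 9)
  | 8 => 4 * a * b ^+ 3 * v (inord 5) + (b ^+ 3 * c + 3 * a * b ^+ 2 * d) * v (inord 6)
         + (2 * b ^+ 2 * c * d + 2 * a * b * d ^+ 2) * v (inord 7)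
         + (3 * b * c * d ^+ 2 + a * d ^+ 3) * v (inord 8) + 4 * c * d ^+ 3 * v (inord 9)
  | _ => b ^+ 4 * v (inord 5) + b ^+ 3 * d * v (inord 6) + b ^+ 2 * d ^+ 2 * v (inord 7)
         + b * d ^+ 3 * v (inord 8) + d ^+ 4 * v (inord 9)
  end.

Definition act_pt (a b c d : C) (v : 'I_10 -> C) : 'I_10 -> C := act_coord a b c d v.

Lemma act_ptE a b c d v k : (k < 10)%N -> act_pt a b c d v (inord k) = act_coord a b c d v k.
Proof. by move=> lt_k; rewrite /act_pt inordK. Qed.

Definition act_mx (g : 'M[C]_2) : ('I_10 -> C) -> 'I_10 -> C :=
  act_pt (g ord0 ord0) (g ord0 ord_max) (g ord_max ord0) (g ord_max ord_max).

Lemma bform_comp g v :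
  [/\ bform (pt1 v) \mPo gsubst g = bform (pt1 (act_mx g v)),
      bform (pt2 v) \mPo gsubst g = bform (pt2 (act_mx g v)) &
      bform (pt4 v) \mPo gsubst g = bform (pt4 (act_mx g v))].
Proof.
split; rewrite !bform_iota /= !big_cons !big_nil /pt1 /pt2 /pt4 /act_mx !inordK // !act_ptE //=;
  by rewrite !comp_mpolyD !comp_mpolyZ comp_mpoly0 !monomial_comp -!mul_mpolyC; ring.
Qed.

Lemma pt_ext v w : pt1 v =1 pt1 w -> pt2 v =1 pt2 w -> pt4 v =1 pt4 w -> v =1 w.
Proof.
move=> e1 e2 e4 i; have lt_i10 := ltn_ord i; rewrite -(inord_val i).
have [lt_i2|le2i] := ltnP i 2; first by have := e1 (inord i); rewrite /pt1 inordK.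
have [lt_i5|le5i] := ltnP i 5.
  by have := e2 (inord (i - 2)); rewrite /pt2 inordK ?subnKC //; lia.
by have := e4 (inord (i - 5)); rewrite /pt4 inordK ?subnKC //; lia.
Qed.

Lemma act_relP g v w : act_rel g v w <-> w =1 act_mx g v.
Proof.
rewrite /act_rel /form_act_rel; have [-> -> ->] := bform_comp g v.
split=> [[/bform_inj e1 /bform_inj e2 /bform_inj e4] | e]; first exact: pt_ext.
by split; apply: eq_bigr => j _; rewrite /pt1 /pt2 /pt4 e.
Qed.

Lemma det2 (g : 'M[C]_2) :
  \det g = g ord0 ord0 * g ord_max ord_max - g ord0 ord_max * g ord_max ord0.
Proof.
rewrite (expand_det_row _ ord0) !big_ord_recl big_ord0 /cofactor !det_mx11 !mxE.
have -> : lift ord0 (ord0 : 'I_1) = ord_max by apply: val_inj.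
have -> : lift ord_max (ord0 : 'I_1) = ord0 by apply: val_inj.
rewrite /=; ring.
Qed.

Definition mx22 (a b c d : C) : 'M[C]_2 :=
  \matrix_(i, j) if i == ord0 then if j == ord0 then a else b else if j == ord0 then c else d.

Lemma invariant_act P a b c d v : SL2invariant P -> a * d - b * c = 1 ->
  P.@[act_pt a b c d v] = P.@[v].
Proof.
move=> invP det1; apply: (invP (mx22 a b c d)); first by rewrite det2 !mxE.
by apply/act_relP => i; rewrite /act_mx !mxE.
Qed.

(* One third of the Hessian of the quartic a evaluated at the zero (l1, -l0) of the
   linear form l. *)
Definition hess_root (R : comRingType) (z : 'I_10 -> R) : R :=
  let l0 := z (inord 0) in let l1 := z (inord 1) in
  let a0 := z (inord 5) in let a1 := z (inord 6) in let a2 := z (inord 7) in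
  let a3 := z (inord 8) in let a4 := z (inord 9) in
  8 * a0 * a2 * l1 ^+ 4 - 3 * a1 ^+ 2 * l1 ^+ 4 + 4 * a1 * a2 * l0 * l1 ^+ 3
  - 24 * a0 * a3 * l0 * l1 ^+ 3 + 48 * a0 * a4 * l0 ^+ 2 * l1 ^+ 2
  + 6 * a1 * a3 * l0 ^+ 2 * l1 ^+ 2 - 4 * a2 ^+ 2 * l0 ^+ 2 * l1 ^+ 2
  - 24 * a1 * a4 * l0 ^+ 3 * l1 + 4 * a2 * a3 * l0 ^+ 3 * l1
  + 8 * a2 * a4 * l0 ^+ 4 - 3 * a3 ^+ 2 * l0 ^+ 4.

Lemma hess_root_act a b c d v :
  hess_root (act_pt a b c d v) = (a * d - b * c) ^+ 6 * hess_root v.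
Proof. by rewrite /hess_root !act_ptE //=; ring. Qed.

Lemma rmorph_hess_root (R S : comNzRingType) (f : {rmorphism R -> S}) z :
  f (hess_root z) = hess_root (f \o z).
Proof. by rewrite /hess_root /=; ring. Qed.

Definition hess_root_mpoly : {mpoly C[10]} := hess_root (fun i => 'X_i).

Lemma meval_hess_root v : hess_root_mpoly.@[v] = hess_root v.
Proof. by rewrite /hess_root_mpoly (rmorph_hess_root (meval v)) /hess_root /= !mevalXU. Qed.

Lemma hess_root_mpoly_homog : hess_root_mpoly \is 6.-homog.
Proof. by rewrite /hess_root_mpoly /hess_root /=; solve_dhomog. Qed.

Lemma hess_root_mpoly_invariant : SL2invariant hess_root_mpoly.
Proof.
move=> g det1 v w /act_relP act_vw; rewrite !meval_hess_root.
by rewrite /hess_root !act_vw -/(hess_root _) hess_root_act -det2 det1 expr1n mul1r.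
Qed.

Lemma p0_not_in_nullcone : ~ in_nullcone p0.
Proof.
move=> null_p0; have := null_p0 _ hess_root_mpoly_invariant 6%N isT hess_root_mpoly_homog.
have -> : hess_root_mpoly.@[p0] = - 48.
  by rewrite meval_hess_root /hess_root /p0 /= !inordK //=; ring.
by move/eqP; rewrite oppr_eq0 pnatr_eq0.
Qed.

(* Weights of the coordinates under diag(t, t^-1), shifted by 4 (the scaling by t^4) so that
   they are nonnegative. *)
Definition torus_wt (i : 'I_10) : nat := nth 0%N [:: 5; 3; 6; 4; 2; 8; 6; 4; 2; 0]%N i.

Lemma torus_act t v : t != 0 ->
  (fun i => t ^+ torus_wt i * v i) =1 (fun i => t ^+ 4 * act_pt t 0 0 t^-1 v i).
Proof.
move=> nz_t i; rewrite -(inord_val i); move: (nat_of_ord i) (ltn_ord i) => k.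
case: k => [|[|[|[|[|[|[|[|[|[|k]]]]]]]]]] lt_k //.
all: by rewrite /torus_wt act_ptE // inordK //=; field.
Qed.

Lemma meval_torus P d v t : SL2invariant P -> P \is d.-homog -> t != 0 ->
  P.@[fun i => t ^+ torus_wt i * v i] = t ^+ (4 * d) * P.@[v].
Proof.
move=> invP homP nz_t; rewrite (meval_eq _ (torus_act v nz_t)) (meval_homog_scale _ _ homP).
by rewrite invariant_act ?exprM // mul0r subr0 divff.
Qed.

Lemma meval_isobaric P d v : SL2invariant P -> P \is d.-homog ->
  P.@[v] = \sum_(m <- msupp P | wdeg torus_wt m == 4 * d) P@_m * \prod_i v i ^+ m i.
Proof.
move=> invP homP; symmetry.
apply: (@sum_pow_coef _ _ _ xpredT (fun m => P@_m * \prod_i v i ^+ m i) (wdeg torus_wt)).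
move=> t nz_t; rewrite mulrC -(meval_torus v invP homP nz_t) mevalE.
by apply: eq_bigr => m _; rewrite prod_weighted mulrCA [RHS]mulrC.
Qed.

Lemma wdeg10E (e : 'I_10 -> nat) (m : 'X_{1..10}) :
  wdeg e m = \sum_(k <- iota 0 10) e (inord k) * m (inord k).
Proof. exact: big_ord_iota. Qed.

Lemma mdeg10E (m : 'X_{1..10}) : mdeg m = \sum_(k <- iota 0 10) m (inord k).
Proof. by rewrite mdegE big_ord_iota. Qed.

Definition p0_mnm : 'X_{1..10} := (U_(inord 0) *+ 2 + U_(inord 8))%MM.

Lemma p0_mnmE k : (k < 10)%N ->
  p0_mnm (inord k) = (if k == 0 then 2 else if k == 8 then 1 else 0)%N.
Proof.
move=> lt_k; rewrite /p0_mnm mnmDE mulmnE !mnm1E -!(inj_eq val_inj) /= !inordK //.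
by case: k lt_k => [|[|[|[|[|[|[|[|[|k]]]]]]]]].
Qed.

Lemma mdeg_p0_mnm : mdeg p0_mnm = 3%N.
Proof. by rewrite mdeg10E /= !big_cons big_nil !p0_mnmE. Qed.

Lemma prod_p0_mnm (v : 'I_10 -> C) : \prod_i v i ^+ p0_mnm i = v (inord 0) ^+ 2 * v (inord 8).
Proof. by rewrite -mevalX /p0_mnm mpolyXD -mpolyXn !expr2 !mevalM !mevalXU. Qed.

Lemma p0E k : (k < 10)%N -> p0 (inord k) = if k == 0%N then 1 else if k == 8%N then 4 else 0.
Proof. by move=> lt_k; rewrite /p0 /= inordK. Qed.

Lemma p0_isobaric_mnm (m : 'X_{1..10}) d : \prod_i p0 i ^+ m i != 0 -> mdeg m = d ->
  wdeg torus_wt m = (4 * d)%N -> (0 < d <= 5)%N -> m = p0_mnm.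
Proof.
move=> /prod_exp_neq0 zero; have z k : (k < 10)%N -> k \notin [:: 0; 8]%N -> m (inord k) = 0%N.
  move=> lt_k; rewrite !inE negb_or => /andP[/negbTE k0 /negbTE k8].
  by rewrite zero // p0E // k0 k8.
rewrite mdeg10E wdeg10E /= !big_cons !big_nil /torus_wt !inordK //=.
move: (z 1%N isT isT) (z 2%N isT isT) (z 3%N isT isT) (z 4%N isT isT) (z 5%N isT isT)
  (z 6%N isT isT) (z 7%N isT isT) (z 9%N isT isT) => *.
apply: eq_mnm_inord => k le_k9; rewrite p0_mnmE //.
case: eqP => [-> | /eqP k0]; first lia.
case: eqP => [-> | /eqP k8]; first lia.
by rewrite z // !inE negb_or k0 k8.
Qed.

Definition x_exp (i : 'I_10) : nat := nth 0%N [:: 0; 0; 0; 0; 0; 4; 3; 2; 1; 0]%N i.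

Definition binom_pt (i : 'I_10) : C := (nth 0%N [:: 1; 0; 0; 0; 0; 1; 4; 6; 4; 1]%N i)%:R.

(* The point (x, 0, (c x + y)^4). *)
Definition qpt (c : C) : 'I_10 -> C := fun i => c ^+ x_exp i * binom_pt i.

Lemma qpt_act c : qpt c =1 act_pt 1 0 c 1 (qpt 0).
Proof.
move=> i; rewrite -(inord_val i); move: (nat_of_ord i) (ltn_ord i) => k.
case: k => [|[|[|[|[|[|[|[|[|[|k]]]]]]]]]] lt_k //.
all: by rewrite act_ptE //= /qpt /x_exp /binom_pt !inordK //=; ring.
Qed.

Lemma invariant_qpt P c : SL2invariant P -> P.@[qpt c] = P.@[qpt 0].
Proof.
move=> invP; rewrite (meval_eq _ (qpt_act c)) invariant_act //.
by rewrite mul1r mul0r subr0.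
Qed.

Lemma cubic_invariant_qpt0 P : SL2invariant P -> P \is 3.-homog -> P.@[qpt 0] = 0.
Proof.
move=> invP homP; rewrite (meval_isobaric _ invP homP) big1_seq // => m /andP[/eqP wt_m _].
apply/eqP; apply: contraT; rewrite mulf_eq0 negb_or => /andP[_ /prod_exp_neq0 zero].
have z k : (0 < k < 9)%N -> m (inord k) = 0%N.
  move=> /andP[k_gt0 lt_k9]; apply: zero; rewrite /qpt /x_exp /binom_pt inordK; last lia.
  by case: k k_gt0 lt_k9 => [|[|[|[|[|[|[|[|[|k]]]]]]]]] //= _ _;
    rewrite ?expr0n ?mulr0n ?mulr0 ?mul0r.
move: wt_m; rewrite wdeg10E /= !big_cons !big_nil /torus_wt !inordK //=.
move: (z 1%N isT) (z 2%N isT) (z 3%N isT) (z 4%N isT) (z 5%N isT) (z 6%N isT) (z 7%N isT)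
  (z 8%N isT); lia.
Qed.

Lemma qpt_isobaric_mnm (m : 'X_{1..10}) : \prod_i binom_pt i ^+ m i != 0 -> mdeg m = 3%N ->
  wdeg torus_wt m = 12%N -> wdeg x_exp m = 1%N -> m = p0_mnm.
Proof.
move=> /prod_exp_neq0 zero; have z k : (0 < k < 5)%N -> m (inord k) = 0%N.
  move=> /andP[k_gt0 lt_k5]; apply: zero; rewrite /binom_pt inordK; last lia.
  by case: k k_gt0 lt_k5 => [|[|[|[|[|k]]]]].
rewrite mdeg10E !wdeg10E /= !big_cons !big_nil /torus_wt /x_exp !inordK //=.
move: (z 1%N isT) (z 2%N isT) (z 3%N isT) (z 4%N isT) => *.
apply: eq_mnm_inord => k le_k9; rewrite p0_mnmE //.
by case: k le_k9 => [|[|[|[|[|[|[|[|[|[|k]]]]]]]]]] //= _; lia.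
Qed.

Lemma mcoeff_p0_mnm_cubic P : SL2invariant P -> P \is 3.-homog -> P@_p0_mnm = 0.
Proof.
move=> invP homP.
have qpt_expand c : c != 0 ->
    \sum_(m <- msupp P | wdeg torus_wt m == 4 * 3)
      (P@_m * \prod_i binom_pt i ^+ m i) * c ^+ wdeg x_exp m = 0 * c ^+ 1.
  move=> _; rewrite mul0r -[RHS](cubic_invariant_qpt0 invP homP) -(invariant_qpt c invP).
  rewrite (meval_isobaric _ invP homP); apply: eq_bigr => m _.
  by rewrite /qpt prod_weighted mulrCA [RHS]mulrC.
have := sum_pow_coef qpt_expand.
rewrite (sum_msupp_single (m0 := p0_mnm)); last 2 first.
- by rewrite !wdeg10E /= !big_cons !big_nil !p0_mnmE // /torus_wt /x_exp !inordK.
- move=> m mP /andP[/eqP wt_m /eqP xwt_m]; rewrite mulf_eq0 negb_or => /andP[_ nz].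
  exact: qpt_isobaric_mnm nz (dhomog_mf homP mP) wt_m xwt_m.
rewrite prod_p0_mnm /binom_pt !inordK //= expr1n mul1r => /eqP.
by rewrite mulf_eq0 pnatr_eq0 orbF => /eqP.
Qed.

Lemma mcoeff_p0_mnm P d : SL2invariant P -> P \is d.-homog -> P@_p0_mnm = 0.
Proof.
move=> invP homP; have [d3|d_neq3] := eqVneq d 3%N.
  by rewrite d3 in homP; exact: mcoeff_p0_mnm_cubic.
by apply: dhomog_nemf_coeff homP _; rewrite /= mdeg_p0_mnm eq_sym.
Qed.

Lemma invariant_vanish_p0 P : SL2invariant P ->
  forall d, (2 <= d <= 5)%N -> P \is d.-homog -> P.@[p0] = 0.
Proof.
move=> invP d /andP[/ltnW d_gt0 le_d5] homP.
rewrite (meval_isobaric _ invP homP) big1_seq // => m /andP[/eqP wt_m mP].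
apply/eqP; apply: contraT; rewrite mulf_eq0 negb_or => /andP[nz_coef nz_prod].
have d_range : (0 < d <= 5)%N by rewrite d_gt0 le_d5.
rewrite (p0_isobaric_mnm nz_prod (dhomog_mf homP mP) wt_m d_range) in nz_coef.
by rewrite (mcoeff_p0_mnm invP homP) eqxx in nz_coef.
Qed.

Lemma hsop_vanish_nullcone n (f : 'I_n -> {mpoly C[10]}) v : is_hsop f ->
  (forall i t, (f i).@[fun j => t * v j] = 0) -> in_nullcone v.
Proof.
case=> _ _ integral f_vanish P invP d d_gt0 homP.
have [Q monQ rootQ] := integral P invP.
pose S := map_poly (meval (fun _ : 'I_n => 0 : C)) Q.
have S_root t : S.[t ^+ d * P.@[v]] = 0.
  have := congr1 (meval (fun j => t * v j)) rootQ.
  rewrite rmorph0 -horner_map -(meval_homog_scale _ _ homP) => <-; congr _.[_].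
  apply/polyP => i; rewrite !coef_map /= comp_mpoly_meval; apply: meval_eq => j.
  by rewrite tnth_map tnth_ord_tuple f_vanish.
apply/eqP; apply: contraT => nz_Pv.
have S0 : S = 0.
  apply: (@roots_geq_poly_eq0 _ S [seq i%:R | i <- iota 0 (size S)]).
  - apply/allP => y /mapP[i _ ->]; apply/eqP.
    by have := S_root (d.-root (i%:R / P.@[v])); rewrite rootCK // divfK.
  - by rewrite map_inj_uniq ?iota_uniq // => a b /eqP; rewrite eqr_nat => /eqP.
  - by rewrite size_map size_iota.
by have := monic_neq0 (monic_map _ monQ : S \is monic); rewrite S0 eqxx.
Qed.

Theorem mainTheorem8 :
  ~ (exists f : 'I_7 -> {mpoly C[10]},
       is_hsop f /\ forall i : 'I_7, f i \is (nth 0%N [:: 2; 2; 3; 3; 3; 4; 5] i).-homog)%N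
  /\ (forall P : {mpoly C[10]}, SL2invariant P ->
        forall d : nat, (2 <= d <= 5)%N -> P \is d.-homog -> P.@[p0] = 0)
  /\ ~ in_nullcone p0.
Proof.
split; last by split; [exact: invariant_vanish_p0 | exact: p0_not_in_nullcone].
case=> f [hsop_f homf]; apply: p0_not_in_nullcone; apply: (hsop_vanish_nullcone hsop_f) => i t.
have [inv_f _ _] := hsop_f; have homfi := homf i.
rewrite (meval_homog_scale _ _ homfi) (invariant_vanish_p0 (proj1 (inv_f i)) _ homfi) ?mulr0 //.
by case: i {homfi} => [[|[|[|[|[|[|[|k]]]]]]] lt_i].
Qed.
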